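(* Let $m\ge1$, let $p_1,\dots,p_m\ge 0$ with $p_1+\cdots+p_m=1$, let $S$ be a finite nonempty word on $[m]$ all of whose letters have positive probability, and let $S'$ be the reversal of $S$. For a die showing face $i$ with probability $p_i$ rolled independently, let $E(W)$ denote the expected number of rolls until the word $W$ first appears as a block of consecutive outcomes. Then $E(S')=E(S)$. *)

From HB Require Import structures.
From mathcomp Require Import all_boot all_order all_algebra.
From mathcomp Require Import all_classical all_reals all_analysis.
Set Implicit Arguments. Unset Strict Implicit. Unset Printing Implicit Defensive.
Import Order.TTheory GRing.Theory Num.Theory.
Local Open Scope ring_scope.

(* Probability that the first n rolls of a die with face probabilities p
   (i.i.d. rolls) do NOT contain the word W as a block of consecutive
   outcomes, i.e. P(T_W > n) where T_W is the waiting time for W. *)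
Definition avoid_prob (R : realType) (m : nat) (p : 'I_m -> R)
  (W : seq 'I_m) (n : nat) : R :=
  \sum_(u : n.-tuple 'I_m | ~~ infix W u) \prod_(x <- u) p x.

(* Expected waiting time E(W) = E[T_W] in the extended reals, via the
   tail-sum formula E[T] = \sum_{n >= 0} P(T > n) for a random variable
   with values in {0,1,2,...} U {+oo} (it is +oo if P(T = +oo) > 0). *)
Definition expected_wait (R : realType) (m : nat) (p : 'I_m -> R)
  (W : seq 'I_m) : \bar R :=
  (\sum_(0 <= n <oo) (avoid_prob p W n)%:E)%E.

From HB Require Import structures.
From mathcomp Require Import all_boot all_order all_algebra.
From mathcomp Require Import all_classical all_reals all_analysis.
Import Order.TTheory GRing.Theory Num.Theory.
Local Open Scope ring_scope.

(* Reversing the first n rolls is a bijection of n-tuples that preserves the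
   product weight, and W occurs in u exactly when rev W occurs in rev u.
   Hence the waiting times for W and rev W have the same tail probabilities
   P(T > n) for every n, and therefore the same expectation. *)

Lemma rev_tupleK (n : nat) (T : Type) : involutive (@rev_tuple n T).
Proof. by move=> t; apply: val_inj; rewrite /= revK. Qed.

Lemma avoid_prob_rev (R : realType) (m : nat) (p : 'I_m -> R)
    (W : seq 'I_m) (n : nat) :
  avoid_prob p (rev W) n = avoid_prob p W n.
Proof.
rewrite /avoid_prob (reindex_inj (inv_inj (@rev_tupleK n 'I_m))) /=.
by apply: eq_big => [u | u _]; rewrite ?infix_rev ?big_rev.
Qed.

Lemma expected_wait_rev (R : realType) (m : nat) (p : 'I_m -> R)
    (W : seq 'I_m) :
  expected_wait p (rev W) = expected_wait p W.
Proof.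
by rewrite /expected_wait; under eq_eseriesr do rewrite avoid_prob_rev.
Qed.

Theorem corollary4p4 (R : realType) (m : nat) (p : 'I_m -> R) (S : seq 'I_m)
  (hm : (1 <= m)%N)
  (hp0 : forall i, 0 <= p i)
  (hp1 : \sum_(i < m) p i = 1)
  (hS : (0 < size S)%N)
  (hSpos : forall i, i \in S -> 0 < p i) :
  expected_wait p (rev S) = expected_wait p S.
Proof. exact: expected_wait_rev. Qed.
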